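(* Let $S$ be an inverse semigroup acting on a presheaf of metric spaces $(X,E(S),p)$. For each $s\in S$, the map $\theta_s\colon X\cdot ss^{-1}\to X\cdot s^{-1}s$, $x\mapsto x\cdot s$, is an isometry with respect to the extended metric $d$, where $X\cdot e=\{x\cdot e: x\in X\}$.
   Context: An inverse semigroup is a semigroup $S$ in which every $s$ has a unique $s^{-1}\in S$ with $ss^{-1}s=s$ and $s^{-1}ss^{-1}=s^{-1}$. $E(S)$ is its set of idempotents, which commute and form a meet-semilattice with meet $ef$ (partial order $e\le f$ iff $e=ef$). Presheaf: for a meet-semilattice $E$, a presheaf $(X,E,p)$ is a set $X$ with maps $p\colon X\to E$ and $X\times E\to X$, $(x,e)\mapsto x\cdot e$, such that $(x\cdot e)\cdot f=x\cdot ef$, $x\cdot p(x)=x$, $p(x\cdot e)=p(x)e$. Fibers are $X_e=p^{-1}(e)$. A presheaf of metric spaces is such a presheaf with $p$ surjective, each fiber $X_e$ a metric space with metric $d_e$, and $d_e(x,y)\ge d_{ef}(x\cdot f,y\cdot f)$ for $x,y\in X_e$. The extended metric $d$ on $X$ is $d(x,y)=d_e(x,y)$ if $x,y\in X_e$, and $\infty$ if they lie in different fibers. Action: $S$ acts on $(X,E(S),p)$ if there is a right action $X\times S\to X$ (so $(x\cdot s)\cdot t=x\cdot (st)$) extending the presheaf map $X\times E(S)\to X$, with $p(x\cdot s)=s^{-1}p(x)s$ and $d_e(x,y)\ge d_{s^{-1}es}(x\cdot s,y\cdot s)$ for all $x,y\in X_e$, $s\in S$. *)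

From mathcomp Require Import all_boot all_order all_algebra.
From mathcomp Require Import boolp classical_sets reals constructive_ereal.
Set Implicit Arguments. Unset Strict Implicit. Unset Printing Implicit Defensive.
Import Order.TTheory GRing.Theory Num.Theory.
Local Open Scope ring_scope.

Record inverse_semigroup (S : Type) (mul : S -> S -> S) (inv : S -> S) : Prop := {
  is_assoc : forall a b c, mul a (mul b c) = mul (mul a b) c;
  is_inv1 : forall s, mul (mul s (inv s)) s = s;
  is_inv2 : forall s, mul (mul (inv s) s) (inv s) = inv s;
  is_inv_unique : forall s t, mul (mul s t) s = s -> mul (mul t s) t = t -> t = inv s
}.

Definition idempotent (S : Type) (mul : S -> S -> S) (e : S) : Prop := mul e e = e.

(* S acts (on the right, via act) on the presheaf of metric spaces (X, E(S), p),
   whose fiber X_e carries the metric d e.  The presheaf restriction map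
   X x E(S) -> X is the restriction of act to idempotents. *)
Record metric_presheaf_action (R : realType) (S X : Type)
  (mul : S -> S -> S) (inv : S -> S)
  (act : X -> S -> X) (p : X -> S) (d : S -> X -> X -> R) : Prop := {
  p_idem : forall x, idempotent mul (p x);
  p_surj : forall e, idempotent mul e -> exists x, p x = e;
  pre_comp : forall x e f, idempotent mul e -> idempotent mul f ->
      act (act x e) f = act x (mul e f);
  pre_unit : forall x, act x (p x) = x;
  pre_p : forall x e, idempotent mul e -> p (act x e) = mul (p x) e;
  met_ge0 : forall e x y, idempotent mul e -> p x = e -> p y = e -> 0 <= d e x y;
  met_eq0 : forall e x y, idempotent mul e -> p x = e -> p y = e ->
      (d e x y = 0 <-> x = y);
  met_sym : forall e x y, idempotent mul e -> p x = e -> p y = e -> d e x y = d e y x;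
  met_tri : forall e x y z, idempotent mul e -> p x = e -> p y = e -> p z = e ->
      d e x z <= d e x y + d e y z;
  met_restr : forall e f x y, idempotent mul e -> idempotent mul f ->
      p x = e -> p y = e -> d (mul e f) (act x f) (act y f) <= d e x y;
  act_comp : forall x s t, act (act x s) t = act x (mul s t);
  act_p : forall x s, p (act x s) = mul (mul (inv s) (p x)) s;
  act_contr : forall e s x y, idempotent mul e -> p x = e -> p y = e ->
      d (mul (mul (inv s) e) s) (act x s) (act y s) <= d e x y
}.

Definition ext_dist (R : realType) (S X : Type) (p : X -> S) (d : S -> X -> X -> R)
  (x y : X) : \bar R :=
  if `[< p x = p y >] then ((d (p x) x y)%:E)%E else (+oo)%E.

Definition Xdot (S X : Type) (act : X -> S -> X) (e : S) : set X :=
  [set act x e | x in setT]%classic.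

Definition isometry_between (X V : Type) (ed : X -> X -> V) (A B : set X) (f : X -> X) : Prop :=
  [/\ (forall x, A x -> B (f x)),
      (forall x y, A x -> A y -> ed (f x) (f y) = ed x y) &
      (forall y, B y -> exists2 x, A x & f x = y)].

From mathcomp Require Import all_boot all_order all_algebra.
From mathcomp Require Import boolp classical_sets reals constructive_ereal.
Import Order.TTheory.

Set Implicit Arguments.
Unset Strict Implicit.
Unset Printing Implicit Defensive.

(* Every action map [x |-> x . s] is a contraction for the extended metric,
   because it maps fibres to fibres and contracts each fibre.  On [X . ss^-1]
   the map [x |-> x . s^-1] undoes [x |-> x . s], and since [s^-1^-1 = s] the
   roles of [s] and [s^-1] can be swapped; two mutually inverse contractions
   are isometries. *)

Section InverseSemigroup.

Variables (S : Type) (mul : S -> S -> S) (inv : S -> S).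
Hypothesis HS : inverse_semigroup mul inv.

Lemma is_invK (s : S) : inv (inv s) = s.
Proof. exact/esym/(is_inv_unique HS (is_inv2 HS s) (is_inv1 HS s)). Qed.

Lemma is_inv1A (s : S) : mul s (mul (inv s) s) = s.
Proof. by rewrite (is_assoc HS) (is_inv1 HS). Qed.

End InverseSemigroup.

Section Action.

Variables (R : realType) (S X : Type) (mul : S -> S -> S) (inv : S -> S).
Variables (act : X -> S -> X) (p : X -> S) (d : S -> X -> X -> R).
Hypothesis HS : inverse_semigroup mul inv.
Hypothesis HA : metric_presheaf_action mul inv act p d.

Lemma act_in_Xdot (x : X) (s : S) : Xdot act (mul (inv s) s) (act x s).
Proof. by exists (act x s) => //; rewrite (act_comp HA) (is_inv1A HS). Qed.

Lemma Xdot_actK (s : S) (x : X) :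
  Xdot act (mul s (inv s)) x -> act (act x s) (inv s) = x.
Proof. by case=> z _ <-; rewrite !(act_comp HA) (is_assoc HS) (is_inv1 HS). Qed.

Lemma ext_dist_act_le (s : S) (x y : X) :
  (ext_dist p d (act x s) (act y s) <= ext_dist p d x y)%E.
Proof.
rewrite /ext_dist; case: (asboolP (p x = p y)) => [pxy | _]; last exact: leey.
rewrite !(act_p HA) pxy asboolT // lee_fin.
exact: (act_contr HA s (p_idem HA y) pxy erefl).
Qed.

End Action.

Theorem lemma1p12 (R : realType) (S X : Type) (mul : S -> S -> S) (inv : S -> S)
  (act : X -> S -> X) (p : X -> S) (d : S -> X -> X -> R)
  (HS : inverse_semigroup mul inv)
  (HA : metric_presheaf_action mul inv act p d) (s : S) :
  isometry_between (ext_dist p d)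
    (Xdot act (mul s (inv s))) (Xdot act (mul (inv s) s)) (fun x => act x s).
Proof.
split=> [x _ | x y Ax Ay | y By].
- exact: (act_in_Xdot HS HA).
- apply/le_anti/andP; split; first exact: (ext_dist_act_le HA).
  rewrite -{1}(Xdot_actK HS HA Ax) -{1}(Xdot_actK HS HA Ay).
  exact: (ext_dist_act_le HA).
- have By' : Xdot act (mul (inv s) (inv (inv s))) y by rewrite (is_invK HS).
  exists (act y (inv s)).
    by rewrite -{1}(is_invK HS s); apply: (act_in_Xdot HS HA).
  by rewrite -{2}(is_invK HS s) (Xdot_actK HS HA By').
Qed.
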